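(* Let $\vec G$ be a $6$-edge-connected bipartite directed graph with vertex classes $A$ and $B$, such that the degree of each vertex of $A$ is divisible by $5$. If $\vec G$ admits a fractional factorization $\mathcal F=(M,F,H)$ for $A$, then $\vec G$ admits an $\mathcal F$-canonical decomposition.
   Context: Graphs are simple. A directed graph is a graph together with an orientation of its edges; its edges are ordered pairs $(u,v)$ (written $uv$, directed from $u$ to $v$); it is $k$-edge-connected if its underlying (undirected) graph is. A sequence of vertices $v_0v_1\cdots v_k$ of a directed graph is a trail (resp. path) if it is a trail (resp. path) in the underlying undirected graph (orientations are ignored); its length is $k$. For a set $S$ of directed edges, $d^+_S(v)$, $d^-_S(v)$ are out- and in-degree of $v$ in the subgraph formed by $S$. A fractional factorization $(M,F,H)$ of $\vec G$ for $A$ is a partition of the edge set of $\vec G$ into three sets $M,F,H$ such that: (i) every edge of $M$ is directed from $B$ to $A$; (ii) for every $v\in A$, $d^-_F(v)=d^+_F(v)=d^-_H(v)=d^+_H(v)=d^-_M(v)=d(v)/5$; (iii) for every $v\in B$, $d^-_F(v)=d^+_F(v)$ and $d^-_H(v)=d^+_H(v)$. For $\mathcal F=(M,F,H)$: a trail $abcde$ of length $4$ with $ab\in M$, $bc,cd\in F$, $de\in H$ is an $\mathcal F$-basic path if it is a path. A trail $abcdef$ of length 5 such that $abcde$ is an $\mathcal F$-basic path is an $\mathcal F$-canonical path if it is a path, and an $\mathcal F$-canonical trail otherwise. An $\mathcal F$-canonical decomposition of $\vec G$ is a partition of its edge set into edge sets of $\mathcal F$-canonical paths and $\mathcal F$-canonical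 trails. *)

From mathcomp Require Import all_boot.
Set Implicit Arguments. Unset Strict Implicit. Unset Printing Implicit Defensive.

(* A directed graph on the finite vertex type T is given by a relation
   d : rel T, where d u v means the directed edge uv (from u to v) is present. *)
Definition simple_digraph (T : finType) (d : rel T) : Prop :=
  (forall x, ~~ d x x) /\ (forall x y, ~~ (d x y && d y x)).

Definition adj (T : finType) (d : rel T) : rel T := fun x y => d x y || d y x.

Definition edges (T : finType) (d : rel T) : {set T * T} :=
  [set e | d e.1 e.2].

Definition deg (T : finType) (d : rel T) (v : T) : nat := #|[set u | adj d v u]|.

Definition connected_rel (T : finType) (r : rel T) : Prop :=
  forall x y, connect r x y.

Definition k_edge_connected (T : finType) (d : rel T) (k : nat) : Prop :=
  1 < #|T| /\
  forall S : {set T * T}, #|S :&: edges d| < k ->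
    connected_rel (adj (fun x y => d x y && ((x, y) \notin S))).

Definition bipartite_classes (T : finType) (d : rel T) (A : {set T}) : Prop :=
  forall x y, d x y -> (x \in A) != (y \in A).

Definition outdeg (T : finType) (S : {set T * T}) (v : T) : nat :=
  #|[set e in S | e.1 == v]|.
Definition indeg (T : finType) (S : {set T * T}) (v : T) : nat :=
  #|[set e in S | e.2 == v]|.

Definition fractional_factorization (T : finType) (d : rel T) (A : {set T})
    (M F H : {set T * T}) : Prop :=
  [/\ M :|: F :|: H = edges d,
      [disjoint M & F], [disjoint M & H] & [disjoint F & H]] /\
  (forall e, e \in M -> (e.1 \in ~: A) && (e.2 \in A)) /\
      (forall v, v \in A ->
         [/\ indeg F v = deg d v %/ 5, outdeg F v = deg d v %/ 5,
             indeg H v = deg d v %/ 5, outdeg H v = deg d v %/ 5 &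
             indeg M v = deg d v %/ 5]) /\
      (forall v, v \in ~: A -> indeg F v = outdeg F v /\ indeg H v = outdeg H v).

Definition dedge (T : finType) (d : rel T) (x y : T) : T * T :=
  if d x y then (x, y) else (y, x).

Definition walk_edges (T : finType) (d : rel T) (s : seq T) : seq (T * T) :=
  match s with [::] => [::] | x :: t => pairmap (dedge d) x t end.

(* trail in the underlying graph (orientations ignored): consecutive vertices
   adjacent, edges pairwise distinct. Its length is size s - 1. *)
Definition is_trail (T : finType) (d : rel T) (s : seq T) : bool :=
  match s with [::] => false | x :: t => path (adj d) x t && uniq (walk_edges d s) end.

Definition is_path (T : finType) (d : rel T) (s : seq T) : bool :=
  is_trail d s && uniq s.

Definition basic_path (T : finType) (d : rel T) (M F H : {set T * T}) (s : seq T)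
  : bool :=
  match s with
  | [:: a; b; c; e1; e2] =>
      [&& is_path d s, (a, b) \in M, (b, c) \in F, (c, e1) \in F & (e1, e2) \in H]
  | _ => false
  end.

Definition canonical_walk (T : finType) (d : rel T) (M F H : {set T * T}) (s : seq T)
  : bool :=
  [&& size s == 6, is_trail d s & basic_path d M F H (take 5 s)].

Definition canonical_path (T : finType) (d : rel T) (M F H : {set T * T}) (s : seq T)
  : bool := canonical_walk d M F H s && is_path d s.

Definition canonical_trail (T : finType) (d : rel T) (M F H : {set T * T}) (s : seq T)
  : bool := canonical_walk d M F H s && ~~ is_path d s.

Definition canonical_decomposition (T : finType) (d : rel T) (M F H : {set T * T})
  : Prop :=
  exists P : seq (seq T),
    [/\ (forall s, s \in P -> canonical_path d M F H s || canonical_trail d M F H s),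
        (forall e, e \in edges d <-> exists2 s, s \in P & e \in walk_edges d s) &
        (forall i j, i < size P -> j < size P -> i != j ->
           [disjoint [set e in walk_edges d (nth [::] P i)]
                   & [set e in walk_edges d (nth [::] P j)]])].

From mathcomp Require Import all_boot perm zify.
From Stdlib Require Import Classical.
Set Implicit Arguments. Unset Strict Implicit. Unset Printing Implicit Defensive.

(* Let D be the set of F-edges bc with b in A. Pairing the F-edges entering and
   leaving each vertex of B (possible since F is balanced there) extends every
   bc in D to b -> c -> d with d in A; similarly H-edges de with d in A are
   paired with H-edges ef at e. Condition (ii) makes the fibres of b and of d
   over D have deg/5 elements, exactly as many as the M-edges entering b and
   the H-edges leaving d. Choosing these injectively on each fibre gives, for
   every bc in D, a walk abcdef, and these walks partition the edges because
   each of the five edge classes is hit bijectively. By bipartiteness and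
   antisymmetry abcde is a path unless a = e.
   Among all admissible choices take one with fewest clashes a = e. If x has a
   clash of colour a, exchanging the choices of x and of any y sharing an end
   with x keeps the number of clashes minimal and moves the clash to y; hence
   every y reachable from x through shared ends has colour a at one of its
   ends. Since fibres have at least two elements (6-edge-connectivity gives
   deg >= 10 on A), at most half of that component can have colour a at its
   b-end, and at most half at its d-end -- impossible, as x has it at both. *)

Lemma ex_minimal (U : Type) (P : U -> Prop) (m : U -> nat) :
  (exists u, P u) -> exists2 u, P u & forall v, P v -> m u <= m v.
Proof.
move=> [u Pu]; have [n] := ubnP (m u); elim: n u Pu => // n IH u Pu mu_lt.
have [[v [Pv lt_vu]]|no_smaller] := classic (exists v, P v /\ m v < m u).
  exact: (IH v Pv (leq_trans lt_vu mu_lt)).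
exists u => // v Pv; rewrite leqNgt; apply/negP => lt_vu.
by apply: no_smaller; exists v.
Qed.

Lemma in_inj_card_onto (E1 E2 : finType) (P : {set E1}) (Q : {set E2}) (f : E1 -> E2) :
  {in P &, injective f} -> {in P, forall x, f x \in Q} -> #|Q| <= #|P| ->
  f @: P = Q.
Proof.
move=> f_inj fPQ leQP; apply/eqP; rewrite eqEcard (card_in_imset f_inj) leQP andbT.
by apply/subsetP => _ /imsetP[x Px ->]; apply: fPQ.
Qed.

Definition fiber (E V : finType) (k : E -> V) (S : {set E}) (v : V) :=
  [set x in S | k x == v].

Section FiberwiseMatching.
Variables (E V : finType) (kP kQ : E -> V).

Lemma fiberwise_injection (P Q : {set E}) :
  (forall v, #|fiber kP P v| <= #|fiber kQ Q v|) ->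
  exists f : E -> E,
    {in P &, injective f} /\ {in P, forall x, f x \in Q /\ kQ (f x) = kP x}.
Proof.
have [n] := ubnP #|P|; elim: n P Q => // n IH P Q ltPn le_fib.
have [->|[x0 Px0]] := set_0Vmem P.
  by exists id; split=> [//|x]; rewrite inE.
have /card_gt0P[y0] : 0 < #|fiber kQ Q (kP x0)|.
  by apply: leq_trans (le_fib _); apply/card_gt0P; exists x0; rewrite inE Px0 /=.
rewrite inE => /andP[Qy0 /eqP ky0].
have fiberD1 S kS z v : fiber kS (S :\ z) v = fiber kS S v :\ z.
  by apply/setP => x; rewrite !inE andbA.
have ltP : #|P :\ x0| < n by move: ltPn; rewrite (cardsD1 x0 P) Px0.
have le_fibD1 v : #|fiber kP (P :\ x0) v| <= #|fiber kQ (Q :\ y0) v|.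
  have := le_fib v; rewrite !fiberD1 (cardsD1 x0 (fiber _ P v)).
  by rewrite (cardsD1 y0 (fiber _ Q v)) !inE Px0 Qy0 ky0; case: (kP x0 == v).
have [f [f_inj fPQ]] := IH _ _ ltP le_fibD1.
exists (fun x => if x == x0 then y0 else f x); split.
  move=> x1 x2 Px1 Px2 /=.
  have PD1 x : x \in P -> x != x0 -> x \in P :\ x0 by rewrite !inE => -> ->.
  case: eqP => [->|/eqP nx1]; case: eqP => [->|/eqP nx2] //.
  - by move=> eq_f; have [] := fPQ x2 (PD1 x2 Px2 nx2); rewrite -eq_f !inE eqxx.
  - by move=> eq_f; have [] := fPQ x1 (PD1 x1 Px1 nx1); rewrite eq_f !inE eqxx.
  - by apply: f_inj; apply: PD1.
move=> x Px; case: eqP => [->//|/eqP nx].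
by have [] := fPQ x; rewrite ?inE ?nx // => /andP[].
Qed.

Lemma fiberwise_bijection (P Q : {set E}) :
  (forall v, #|fiber kP P v| = #|fiber kQ Q v|) ->
  exists f : E -> E,
    [/\ f @: P = Q, {in P &, injective f} & {in P, forall x, kQ (f x) = kP x}].
Proof.
move=> eq_fib; have [|f [f_inj fPQ]] := @fiberwise_injection P Q.
  by move=> v; rewrite eq_fib.
exists f; split=> [|//|x /fPQ[]//]; apply/eqP; rewrite eqEsubset.
have -> : f @: P \subset Q by apply/subsetP => _ /imsetP[x /fPQ[Qfx _] ->].
apply/subsetP => y Qy; set v := kQ y.
have fib_onto : f @: fiber kP P v = fiber kQ Q v.
  apply: in_inj_card_onto; first by move=> ? ? /setIdP[? _] /setIdP[? _]; apply: f_inj.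
    by move=> x /setIdP[/fPQ[Qfx kfx] kx]; rewrite inE Qfx kfx.
  by rewrite eq_fib.
have : y \in fiber kQ Q v by rewrite inE Qy eqxx.
rewrite -fib_onto => /imsetP[x /setIdP[Px _] ->]; exact: imset_f.
Qed.

End FiberwiseMatching.

Section Labelling.
Variables (X V C : finType) (D : {set X}) (st en : X -> V) (SL TL : V -> {set C}).

Definition admissible (lab tip : X -> C) :=
  [/\ {in D, forall x, lab x \in SL (st x)}, {in D, forall x, tip x \in TL (en x)},
      {in D &, forall x y, st x = st y -> lab x = lab y -> x = y} &
      {in D &, forall x y, en x = en y -> tip x = tip y -> x = y}].

Definition clashes (lab tip : X -> C) := [set x in D | lab x == tip x].

Definition minimal_clashes (lab tip : X -> C) :=
  admissible lab tip /\
  forall lab' tip', admissible lab' tip' -> #|clashes lab tip| <= #|clashes lab' tip'|.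

Lemma admissible_swap_lab lab tip P Q :
  P \in D -> Q \in D -> st Q = st P -> admissible lab tip ->
  admissible (lab \o tperm P Q) tip.
Proof.
move=> DP DQ stQP [labS tipT lab_inj tip_inj].
have swapD z : z \in D -> tperm P Q z \in D by case: tpermP => [->|->|].
have st_swap z : st (tperm P Q z) = st z by case: tpermP => [->|->|].
split=> //= [x Dx|x y Dx Dy stxy labxy].
  by rewrite -st_swap; apply: labS; apply: swapD.
by apply: (perm_inj (s := tperm P Q)); apply: lab_inj; rewrite ?swapD ?st_swap.
Qed.

Lemma clashes_swap_lab lab tip P Q :
  admissible lab tip -> P \in clashes lab tip -> Q \in D -> st Q = st P ->
  clashes (lab \o tperm P Q) tip \subset Q |: (clashes lab tip :\ P).
Proof.
move=> [_ _ lab_inj _] /setIdP[DP /eqP clashP] DQ stQP.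
apply/subsetP => z /setIdP[Dz /eqP /=]; rewrite !inE Dz.
case: tpermP => [->|->|/eqP nzP _] labz; rewrite ?eqxx ?orbT //.
  by rewrite (lab_inj Q P) ?eqxx // labz clashP.
by rewrite nzP labz eqxx orbT.
Qed.

Lemma minimal_clashes_tip lab tip P Q :
  minimal_clashes lab tip -> P \in clashes lab tip -> Q \in D -> st Q = st P ->
  tip Q = tip P.
Proof.
move=> [adm min] clashP DQ stQP; have /setIdP[DP /eqP clash] := clashP.
case: (Q =P P) => [->//|/eqP nQP]; apply/eqP/negPn/negP => ntip.
have QnC : Q \notin clashes (lab \o tperm P Q) tip.
  by rewrite inE /= tpermR clash eq_sym (negbTE ntip) andbF.
have sub : clashes (lab \o tperm P Q) tip \subset clashes lab tip :\ P.
  apply/subsetP => z zC; have := subsetP (clashes_swap_lab adm clashP DQ stQP) z zC.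
  by rewrite in_setU1 => /predU1P[eq_zQ|//]; move: zC; rewrite eq_zQ (negbTE QnC).
have := min _ _ (admissible_swap_lab DP DQ stQP adm).
have := subset_leq_card sub; have := cardsD1 P (clashes lab tip); rewrite clashP.
lia.
Qed.

Lemma minimal_clashes_swap_lab lab tip P Q :
  minimal_clashes lab tip -> P \in clashes lab tip -> Q \in D -> st Q = st P ->
  Q != P -> minimal_clashes (lab \o tperm P Q) tip.
Proof.
move=> [adm min] clashP DQ stQP nQP; have DP : P \in D by case/setIdP: clashP.
split=> [|lab' tip' adm']; first exact: admissible_swap_lab.
apply: leq_trans (min _ _ adm').
apply: leq_trans (subset_leq_card (clashes_swap_lab adm clashP DQ stQP)) _.
rewrite cardsU1 (cardsD1 P (clashes lab tip)) clashP.
by case: (Q \notin _).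
Qed.

Lemma card_colour_class_half lab tip (K : {set X}) a :
  admissible lab tip -> K \subset D ->
  {in K & D, forall y z, st y = st z -> z \in K} ->
  {in D, forall x, 1 < #|fiber st D (st x)|} ->
  2 * #|fiber lab K a| <= #|K|.
Proof.
(* A z of colour a has a fibre-mate of another colour, and distinct such z
   have distinct mates, since colours are injective on fibres. *)
move=> [_ _ lab_inj _] KD K_closed fib2.
pose mate z := odflt z [pick y in fiber st D (st z) :\ z].
have mateP z : z \in D -> [/\ mate z \in D, mate z != z & st (mate z) = st z].
  move=> Dz; rewrite /mate; case: pickP => [y|none].
    by rewrite !inE => /and3P[-> -> /eqP].
  have := fib2 z Dz; rewrite (cardsD1 z) !inE Dz eqxx /= add1n ltnS.
  by case/card_gt0P => y; rewrite none.
set L := fiber lab K a.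
have LK : L \subset K by apply/subsetP => z /setIdP[].
have mateL : {in L, forall z, mate z \in K :\: L}.
  move=> z /setIdP[Kz /eqP labz]; have [Dm nmz stm] := mateP z (subsetP KD z Kz).
  rewrite inE (K_closed z _ Kz Dm (esym stm)) andbT.
  apply: contra nmz => /setIdP[Km /eqP labm].
  by apply/eqP; apply: lab_inj; rewrite ?(subsetP KD) ?labm ?labz.
have : #|mate @: L| <= #|K :\: L|.
  by apply: subset_leq_card; apply/subsetP => _ /imsetP[z Lz ->]; exact: mateL.
rewrite card_in_imset => [|z1 z2 /setIdP[K1 /eqP lab1] /setIdP[K2 /eqP lab2] eqm].
  by rewrite cardsD (setIidPr LK); have := subset_leq_card LK; lia.
have [_ _ st1] := mateP z1 (subsetP KD z1 K1).
have [_ _ st2] := mateP z2 (subsetP KD z2 K2).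
apply: lab_inj; rewrite ?(subsetP KD) ?lab1 ?lab2 //.
by rewrite -st1 -st2 eqm.
Qed.

End Labelling.

Lemma admissibleC (X V C : finType) (D : {set X}) st en (SL TL : V -> {set C}) lab tip :
  admissible D st en SL TL lab tip <-> admissible D en st TL SL tip lab.
Proof. by split=> -[]. Qed.

Lemma clashesC (X C : finType) (D : {set X}) (lab tip : X -> C) :
  clashes D lab tip = clashes D tip lab.
Proof. by apply/setP => x; rewrite !inE eq_sym. Qed.

Lemma minimal_clashesC (X V C : finType) (D : {set X}) st en (SL TL : V -> {set C}) lab tip :
  minimal_clashes D st en SL TL lab tip <-> minimal_clashes D en st TL SL tip lab.
Proof.
split=> -[/admissibleC adm min]; split=> // l t /admissibleC adm'.
  by rewrite (clashesC _ tip) (clashesC _ l); apply: min.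
by rewrite (clashesC _ lab) (clashesC _ l); apply: min.
Qed.

Section ClashFree.
Variables (X V C : finType) (D : {set X}) (st en : X -> V) (SL TL : V -> {set C}).
Hypotheses (st_fiber2 : {in D, forall x, 1 < #|fiber st D (st x)|})
           (en_fiber2 : {in D, forall x, 1 < #|fiber en D (en x)|}).

Local Notation admissible := (admissible D st en SL TL).
Local Notation minimal := (minimal_clashes D st en SL TL).

Definition fiber_link : rel X := fun y z => (z \in D) && ((st y == st z) || (en y == en z)).

Lemma minimal_clashes_lab lab tip P Q :
  minimal lab tip -> P \in clashes D lab tip -> Q \in D -> en Q = en P ->
  lab Q = lab P.
Proof.
move=> /minimal_clashesC min; rewrite clashesC => clashP DQ enQP.
exact: minimal_clashes_tip min clashP DQ enQP.
Qed.

Lemma minimal_clashes_swap_tip lab tip P Q :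
  minimal lab tip -> P \in clashes D lab tip -> Q \in D -> en Q = en P ->
  Q != P -> minimal lab (tip \o tperm P Q).
Proof.
move=> /minimal_clashesC min; rewrite clashesC => clashP DQ enQP nQP.
exact/minimal_clashesC/(minimal_clashes_swap_lab min).
Qed.

Lemma minimal_colour_reach (p : seq X) lab tip P :
  minimal lab tip -> P \in clashes D lab tip -> path fiber_link P p ->
  lab (last P p) = lab P \/ tip (last P p) = lab P.
Proof.
(* Exchanging the colours of P and of a fibre-mate z keeps the labelling
   minimal and moves the clash (of the same colour) from P to z. *)
elim: p lab tip P => [|z p IH] lab tip P min clashP /=; first by left.
case/andP => /andP[Dz /orP[/eqP stPz|/eqP enPz]] zp.
all: have /setIdP[_ /eqP clash] := clashP.
all: case: (z =P P) => [eq_zP|/eqP nzP]; first by subst z; exact: IH.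
- have tipz := minimal_clashes_tip min clashP Dz (esym stPz).
  have min' := minimal_clashes_swap_lab min clashP Dz (esym stPz) nzP.
  have := IH _ _ z min'; rewrite inE Dz /= tpermR tipz -clash eqxx => /(_ isT zp).
  by case: tpermP => [->|->|_ _]; [left|right; rewrite tipz|].
- have labz := minimal_clashes_lab min clashP Dz (esym enPz).
  have min' := minimal_clashes_swap_tip min clashP Dz (esym enPz) nzP.
  have := IH _ _ z min'; rewrite inE Dz /= tpermR labz clash eqxx => /(_ isT zp).
  by case: tpermP => [->|->|_ _ //] _; [right|left; rewrite labz].
Qed.

Lemma minimal_clash_free lab tip : minimal lab tip -> {in D, forall x, lab x != tip x}.
Proof.
move=> min P DP; apply/negP => /eqP clash; have [adm _] := min.
have clashP : P \in clashes D lab tip by rewrite inE DP clash eqxx.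
set a := lab P; set K := [set z | connect fiber_link P z].
have KD : K \subset D.
  apply/subsetP => z; rewrite inE => /connectP[p]; case/lastP: p => [_ ->//|p y].
  by rewrite rcons_path last_rcons => /andP[_ /andP[Dy _]] ->.
have K_link y z : y \in K -> fiber_link y z -> z \in K.
  by rewrite !inE => Ky yz; apply: connect_trans Ky (connect1 yz).
have Kst : {in K & D, forall y z, st y = st z -> z \in K}.
  by move=> y z Ky Dz yz; apply: K_link Ky _; rewrite /fiber_link Dz yz eqxx.
have Ken : {in K & D, forall y z, en y = en z -> z \in K}.
  by move=> y z Ky Dz yz; apply: K_link Ky _; rewrite /fiber_link Dz yz eqxx orbT.
set La := fiber lab K a; set Ta := fiber tip K a.
have K_LaTa : K \subset La :|: Ta.
  apply/subsetP => z Kz; rewrite in_setU.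
  have : lab z = a \/ tip z = a.
    by move: Kz; rewrite inE => /connectP[p zp ->]; apply: minimal_colour_reach zp.
  by case=> colz; apply/orP; [left|right]; rewrite inE Kz colz eqxx.
have P_LaTa : P \in La :&: Ta by rewrite !inE connect0 -clash eqxx.
have cardLa : 2 * #|La| <= #|K| := card_colour_class_half a adm KD Kst st_fiber2.
have cardTa : 2 * #|Ta| <= #|K|.
  by move/admissibleC: adm => admC; apply: card_colour_class_half a admC KD Ken en_fiber2.
have := subset_leq_card K_LaTa; rewrite cardsU.
have /card_gt0P : exists x, x \in La :&: Ta by exists P.
have := subset_leq_card (subsetIl La Ta); lia.
Qed.

Theorem exists_clash_free lab0 tip0 : admissible lab0 tip0 ->
  exists lab tip, admissible lab tip /\ {in D, forall x, lab x != tip x}.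
Proof.
move=> adm0; have [[lab tip] adm min] := ex_minimal (fun p => #|clashes D p.1 p.2|)
  (ex_intro (fun p => admissible p.1 p.2) (lab0, tip0) adm0).
exists lab, tip; split=> //; apply: minimal_clash_free; split=> // l t adm'.
exact: (min (l, t)).
Qed.

End ClashFree.

Section Decomposition.
Variables (T : finType) (d : rel T) (A : {set T}) (M F H : {set T * T}).
Hypotheses (d_simple : simple_digraph d) (d_bip : bipartite_classes d A)
  (MFH_edges : M :|: F :|: H = edges d)
  (MF_disj : [disjoint M & F]) (MH_disj : [disjoint M & H]) (FH_disj : [disjoint F & H])
  (M_BA : forall e, e \in M -> (e.1 \in ~: A) && (e.2 \in A))
  (A_regular : forall v, v \in A ->
     [/\ indeg F v = deg d v %/ 5, outdeg F v = deg d v %/ 5,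
         indeg H v = deg d v %/ 5, outdeg H v = deg d v %/ 5 & indeg M v = deg d v %/ 5])
  (B_balanced : forall v, v \in ~: A -> indeg F v = outdeg F v /\ indeg H v = outdeg H v)
  (A_deg : {in A, forall v, 1 < deg d v %/ 5}).

Local Notation fromA S := [set e in S | e.1 \in A].
Local Notation fromB S := [set e in S | e.1 \notin A].

Lemma pairmap_dedge x (s : seq T) : path d x s -> pairmap (dedge d) x s = pairmap pair x s.
Proof. by elim: s x => //= y s IH x /andP[dxy /IH ->]; rewrite /dedge dxy. Qed.

Lemma part_edge e : e \in M :|: F :|: H -> d e.1 e.2.
Proof. by rewrite MFH_edges inE. Qed.

Lemma M_edge e : e \in M -> d e.1 e.2.
Proof. by move=> Me; apply: part_edge; rewrite !inE Me. Qed.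

Lemma F_edge e : e \in F -> d e.1 e.2.
Proof. by move=> Fe; apply: part_edge; rewrite !inE Fe orbT. Qed.

Lemma H_edge e : e \in H -> d e.1 e.2.
Proof. by move=> He; apply: part_edge; rewrite !inE He orbT. Qed.

Lemma bipE u v : d u v -> (v \in A) = (u \notin A).
Proof. by move/d_bip; case: (u \in A); case: (v \in A). Qed.

Lemma d_asym u v : d u v -> d v u = false.
Proof. by case: d_simple => _ asym duv; apply/negP => dvu; have := asym u v; rewrite duv dvu. Qed.

Lemma pairing_at_B (S : {set T * T}) : {in S, forall e, d e.1 e.2} ->
  {in ~: A, forall v, indeg S v = outdeg S v} ->
  exists s : T * T -> T * T,
    [/\ s @: fromA S = fromB S, {in fromA S &, injective s}
      & {in fromA S, forall x, (s x).1 = x.2}].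
Proof.
move=> S_edge S_bal; apply: fiberwise_bijection => v.
have [vA|vB] := boolP (v \in A).
  have -> : fiber snd (fromA S) v = set0.
    apply/setP => e; rewrite !inE; apply/negbTE/negP => /andP[/andP[Se e1A] /eqP e2v].
    by have := bipE (S_edge e Se); rewrite e2v vA e1A.
  have -> : fiber fst (fromB S) v = set0.
    apply/setP => e; rewrite !inE; apply/negbTE/negP.
    by case/andP => /andP[_ + /eqP e1v]; rewrite e1v vA.
  by rewrite cards0.
have -> : fiber snd (fromA S) v = [set e in S | e.2 == v].
  apply/setP => e; rewrite !inE; case: eqP => [e2v|]; rewrite ?andbF ?andbT //.
  by case Se: (e \in S) => //=; rewrite -[_ \in A]negbK -(bipE (S_edge e Se)) e2v.
have -> : fiber fst (fromB S) v = [set e in S | e.1 == v].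
  by apply/setP => e; rewrite !inE; case: eqP => [->|]; rewrite ?vB ?andbF ?andbT.
by apply: S_bal; rewrite inE.
Qed.

Section Chains.
Variables (s1 s2 : T * T -> T * T).
Hypotheses (s1_onto : s1 @: fromA F = fromB F) (s1_inj : {in fromA F &, injective s1})
  (s1_head : {in fromA F, forall x, (s1 x).1 = x.2})
  (s2_onto : s2 @: fromA H = fromB H) (s2_inj : {in fromA H &, injective s2})
  (s2_head : {in fromA H, forall x, (s2 x).1 = x.2}).

(* A chain is indexed by x = bc in D; en x is d, reached through the F-partner
   s1 x = cd, lab x is a, tip x is e, and fin x is f, reached through the
   H-partner of de. *)
Local Notation D := (fromA F).
Definition en x := (s1 x).2.
Local Notation SL := (fun v => [set a | (a, v) \in M]).
Local Notation TL := (fun v => [set b | (v, b) \in H]).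

Lemma s1_fromB x : x \in D -> s1 x \in fromB F.
Proof. by move=> Dx; rewrite -s1_onto imset_f. Qed.

Lemma s1E x : x \in D -> s1 x = (x.2, en x).
Proof. by move=> Dx; rewrite [s1 x]surjective_pairing s1_head. Qed.

Lemma D_sides x : x \in D -> [/\ x \in F, x.1 \in A, x.2 \notin A & en x \in A].
Proof.
move=> Dx; have /setIdP[Fx x1A] := Dx; have /setIdP[Fs1 s1B] := s1_fromB Dx.
by rewrite /en (bipE (F_edge Fx)) (bipE (F_edge Fs1)) x1A.
Qed.

Lemma card_fiber_st v : v \in A -> #|fiber fst D v| = outdeg F v.
Proof.
move=> vA; apply: eq_card => e; rewrite !inE.
by case: eqP => [->|]; rewrite ?vA ?andbF ?andbT.
Qed.

Lemma card_fiber_en v : v \in A -> #|fiber en D v| = indeg F v.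
Proof.
move=> vA; rewrite -(card_in_imset (f := s1)); last first.
  by move=> x y /setIdP[Dx _] /setIdP[Dy _]; apply: s1_inj.
apply: eq_card => e; rewrite inE.
apply/imsetP/andP => [[x /setIdP[Dx /eqP <-] ->]|[Fe /eqP e2v]].
  by have /setIdP[Fs1 _] := s1_fromB Dx.
have : e \in fromB F by rewrite inE Fe -(bipE (F_edge Fe)) e2v vA.
rewrite -s1_onto => /imsetP[x Dx eq_e]; exists x => //.
by rewrite inE Dx /en -eq_e e2v eqxx.
Qed.

Lemma clash_free_labelling : exists lab tip : T * T -> T,
  admissible D fst en SL TL lab tip /\ {in D, forall x, lab x != tip x}.
Proof.
have [f [fD f_inj f_key]] : exists f : T * T -> T * T,
    [/\ f @: D = M, {in D &, injective f} & {in D, forall x, (f x).2 = x.1}].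
  apply: fiberwise_bijection => v; have [vA|vB] := boolP (v \in A).
    by have [_ fv _ _ mv] := A_regular vA; rewrite card_fiber_st // fv -mv.
  have -> : fiber fst D v = set0.
    by apply/setP => e; rewrite !inE; case: eqP => [->|]; rewrite ?(negbTE vB) ?andbF.
  have -> : fiber snd M v = set0.
    apply/setP => e; rewrite !inE; case: eqP => [e2v|]; rewrite ?andbF ?andbT //.
    by apply/negbTE/negP => Me; have /andP[_] := M_BA Me; rewrite e2v (negbTE vB).
  by rewrite cards0.
have [g [gD g_inj g_key]] : exists g : T * T -> T * T,
    [/\ g @: D = fromA H, {in D &, injective g} & {in D, forall x, (g x).1 = en x}].
  apply: fiberwise_bijection => v; have [vA|vB] := boolP (v \in A).
    have [fv _ _ hv _] := A_regular vA; rewrite card_fiber_en // fv -hv.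
    by apply: eq_card => e; rewrite !inE; case: eqP => [->|]; rewrite ?vA ?andbF ?andbT.
  have -> : fiber en D v = set0.
    apply/setP => x; rewrite [x \in fiber _ _ _]inE in_set0; apply/negbTE/negP.
    by case/andP => Dx /eqP env; have [_ _ _] := D_sides Dx; rewrite env (negbTE vB).
  have -> : fiber fst (fromA H) v = set0.
    by apply/setP => e; rewrite !inE; case: eqP => [->|]; rewrite ?(negbTE vB) ?andbF.
  by rewrite cards0.
have st_fiber2 : {in D, forall x, 1 < #|fiber fst D x.1|}.
  move=> x Dx; have [_ x1A _ _] := D_sides Dx.
  by rewrite card_fiber_st //; have [_ -> _ _ _] := A_regular x1A; apply: A_deg.
have en_fiber2 : {in D, forall x, 1 < #|fiber en D (en x)|}.
  move=> x Dx; have [_ _ _ enA] := D_sides Dx.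
  by rewrite card_fiber_en //; have [-> _ _ _ _] := A_regular enA; apply: A_deg.
apply: (exists_clash_free st_fiber2 en_fiber2
          (lab0 := fun x => (f x).1) (tip0 := fun x => (g x).2)).
split=> [x Dx|x Dx|x y Dx Dy /= eq1 eq2|x y Dx Dy /= eq1 eq2]; rewrite ?inE.
- by rewrite -(f_key x Dx) -surjective_pairing -fD imset_f.
- have : g x \in fromA H by rewrite -gD imset_f.
  by rewrite inE -(g_key x Dx) -surjective_pairing => /andP[].
- by apply: f_inj; rewrite // [f x]surjective_pairing [f y]surjective_pairing !f_key // eq1 eq2.
- by apply: g_inj; rewrite // [g x]surjective_pairing [g y]surjective_pairing !g_key // eq1 eq2.
Qed.

Variables (lab tip : T * T -> T).
Hypotheses (adm : admissible D fst en SL TL lab tip) (no_clash : {in D, forall x, lab x != tip x}).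

Definition fin x := (s2 (en x, tip x)).2.
Definition chain x := [:: lab x; x.1; x.2; en x; tip x; fin x].
Definition chain_edges x := [:: (lab x, x.1); x; s1 x; (en x, tip x); s2 (en x, tip x)].

Definition part_index (e : T * T) : nat :=
  if e \in M then 0 else if e \in F then (if e.1 \in A then 1 else 2)
  else if e.1 \in A then 3 else 4.

Lemma chain_edges_parts x : x \in D ->
  [/\ (lab x, x.1) \in M, s1 x \in fromB F, (en x, tip x) \in fromA H
    & s2 (en x, tip x) \in fromB H].
Proof.
move=> Dx; have [labS tipT _ _] := adm; have [_ _ _ enA] := D_sides Dx.
have Mlab : (lab x, x.1) \in M by have := labS x Dx; rewrite inE.
have Htip : (en x, tip x) \in fromA H by have := tipT x Dx; rewrite !inE enA andbT.
by split=> //; [apply: s1_fromB | rewrite -s2_onto imset_f].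
Qed.

Lemma s2E x : x \in D -> s2 (en x, tip x) = (tip x, fin x).
Proof.
move=> Dx; have [_ _ Htip _] := chain_edges_parts Dx.
by rewrite [s2 _]surjective_pairing s2_head.
Qed.

Lemma chain_dpath x : x \in D -> path d (lab x) (behead (chain x)).
Proof.
move=> Dx; have [Fx _ _ _] := D_sides Dx.
have [Mlab /setIdP[Fs1 _] /setIdP[Htip _] /setIdP[Hs2 _]] := chain_edges_parts Dx.
have := F_edge Fs1; have := H_edge Hs2; rewrite s1E // s2E // => d5 d3.
by rewrite /= (M_edge Mlab) (F_edge Fx) d3 (H_edge Htip) d5.
Qed.

Lemma walk_edges_chain x : x \in D -> walk_edges d (chain x) = chain_edges x.
Proof.
move=> Dx; rewrite /walk_edges /chain pairmap_dedge; last exact: chain_dpath.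
by rewrite /chain_edges s1E // s2E // /= -surjective_pairing.
Qed.

Lemma part_index_chain x : x \in D -> map part_index (chain_edges x) = iota 0 5.
Proof.
move=> Dx; have [Fx x1A _ _] := D_sides Dx.
have [Mlab /setIdP[Fs1 s1B] /setIdP[Htip enA] /setIdP[Hs2 s2B]] := chain_edges_parts Dx.
have notM e : e \in F :|: H -> e \in M = false.
  by case/setUP => [/(disjointFl MF_disj)|/(disjointFl MH_disj)].
have notF e : e \in H -> e \in F = false by apply: disjointFl FH_disj.
rewrite /part_index /= Mlab !notM ?inE ?Fx ?Fs1 ?Htip ?Hs2 ?orbT // !notF //.
by rewrite x1A (negbTE s1B) enA (negbTE s2B).
Qed.

Lemma chain_edges_uniq x : x \in D -> uniq (chain_edges x).
Proof. by move=> Dx; apply: (@map_uniq _ _ part_index); rewrite part_index_chain. Qed.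

Lemma nth_part_index x e :
  x \in D -> e \in chain_edges x -> nth e (chain_edges x) (part_index e) = e.
Proof.
move=> Dx /(nthP e)[i i5 ei]; suff -> : part_index e = i by [].
by rewrite -ei -(nth_map e 0) // part_index_chain // nth_iota.
Qed.

Lemma chain_edges_inj x y e :
  x \in D -> y \in D -> e \in chain_edges x -> e \in chain_edges y -> x = y.
Proof.
move=> Dx Dy ex ey; have [_ _ lab_inj tip_inj] := adm.
have [_ _ Htipx _] := chain_edges_parts Dx; have [_ _ Htipy _] := chain_edges_parts Dy.
have : nth e (chain_edges x) (part_index e) = nth e (chain_edges y) (part_index e).
  by rewrite !nth_part_index.
have : part_index e < 5 by rewrite /part_index; do !case: ifP.
case: (part_index e) => [|[|[|[|[|//]]]]] _ /=.
- by case=> eq_lab eq_1; apply: lab_inj.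
- by [].
- exact: s1_inj.
- by case=> eq_en eq_tip; apply: tip_inj.
- by move/s2_inj => /(_ Htipx Htipy) [eq_en eq_tip]; apply: tip_inj.
Qed.

Lemma M_covered e : e \in M -> exists2 x, x \in D & (lab x, x.1) = e.
Proof.
move=> Me; have /andP[_ e2A] := M_BA Me; have [_ _ lab_inj _] := adm.
have onto : [set (lab x, x.1) | x in fiber fst D e.2] = fiber snd M e.2.
  apply: in_inj_card_onto.
  - by move=> x y /setIdP[Dx _] /setIdP[Dy _] [eq_lab eq1]; apply: lab_inj.
  - move=> x /setIdP[Dx /eqP x1]; have [Mlab _ _ _] := chain_edges_parts Dx.
    by rewrite inE Mlab x1 eqxx.
  - by rewrite card_fiber_st //; have [_ -> _ _ <-] := A_regular e2A.
have : e \in fiber snd M e.2 by rewrite inE Me eqxx.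
by rewrite -onto => /imsetP[x /setIdP[Dx _] ->]; exists x.
Qed.

Lemma H_covered e : e \in fromA H -> exists2 x, x \in D & (en x, tip x) = e.
Proof.
move=> /setIdP[He e1A]; have [_ _ _ tip_inj] := adm.
have onto : [set (en x, tip x) | x in fiber en D e.1] = fiber fst H e.1.
  apply: in_inj_card_onto.
  - by move=> x y /setIdP[Dx _] /setIdP[Dy _] [eq_en eq_tip]; apply: tip_inj.
  - move=> x /setIdP[Dx /eqP enx]; have [_ _ /setIdP[Htip _] _] := chain_edges_parts Dx.
    by rewrite inE Htip enx eqxx.
  - by rewrite card_fiber_en //; have [-> _ _ <- _] := A_regular e1A.
have : e \in fiber fst H e.1 by rewrite inE He eqxx.
by rewrite -onto => /imsetP[x /setIdP[Dx _] ->]; exists x.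
Qed.

Lemma chain_edges_cover e : e \in edges d -> exists2 x, x \in D & e \in chain_edges x.
Proof.
rewrite -MFH_edges !inE -orbA => /or3P[Me|Fe|He].
- by have [x Dx <-] := M_covered Me; exists x => //; rewrite inE eqxx.
- have [e1A|e1B] := boolP (e.1 \in A).
    by exists e; rewrite ?inE ?Fe ?e1A // eqxx orbT.
  have : e \in fromB F by rewrite inE Fe e1B.
  by rewrite -s1_onto => /imsetP[x Dx ->]; exists x => //; rewrite !inE eqxx !orbT.
- have [e1A|e1B] := boolP (e.1 \in A).
    have [|x Dx <-] := H_covered (e := e); first by rewrite inE He e1A.
    by exists x => //; rewrite !inE eqxx !orbT.
  have : e \in fromB H by rewrite inE He e1B.
  rewrite -s2_onto => /imsetP[h /H_covered[x Dx <-] ->].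
  by exists x => //; rewrite !inE eqxx !orbT.
Qed.

Lemma chain_edges_edges x e : x \in D -> e \in chain_edges x -> e \in edges d.
Proof.
move=> Dx; have [Fx _ _ _] := D_sides Dx.
have [Mlab /setIdP[Fs1 _] /setIdP[Htip _] /setIdP[Hs2 _]] := chain_edges_parts Dx.
have : all [in M :|: F :|: H] (chain_edges x).
  by rewrite /= !inE Mlab Fx Fs1 Htip Hs2 !orbT.
by rewrite -MFH_edges => /allP; apply.
Qed.

Lemma chain_canonical x : x \in D -> canonical_walk d M F H (chain x).
Proof.
move=> Dx; have [Fx x1A x2B enA] := D_sides Dx.
have [Mlab /setIdP[Fs1 _] /setIdP[Htip _] _] := chain_edges_parts Dx.
have labB : lab x \notin A by have /andP[] := M_BA Mlab; rewrite inE.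
have tipB : tip x \notin A by have /= -> := bipE (H_edge Htip); rewrite enA.
have adjW : subrel d (adj d) by move=> u v duv; rewrite /adj duv.
have dpath := chain_dpath Dx; have /= /and5P[d1 d2 d3 d4 _] := dpath.
have dpath5 : path d (lab x) [:: x.1; x.2; en x; tip x].
  move: dpath; rewrite -[behead _]/([:: x.1; x.2; en x; tip x] ++ [:: fin x]).
  by rewrite cat_path => /andP[].
have neqBA u v : u \notin A -> v \in A -> u != v by move=> uB vA; apply: contraNneq uB => ->.
have neqAB u v : u \in A -> v \notin A -> u != v by move=> uA vB; rewrite eq_sym neqBA.
have neq2 u v w : d u v -> d v w -> u != w.
  by move=> duv dvw; apply/eqP => euw; rewrite euw (d_asym dvw) in duv.
have trail : is_trail d (chain x).
  apply/andP; split; first exact: sub_path adjW _ _ dpath.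
  by rewrite walk_edges_chain // chain_edges_uniq.
have path5 : is_path d [:: lab x; x.1; x.2; en x; tip x].
  apply/andP; split; first (apply/andP; split; first exact: sub_path adjW _ _ dpath5).
    rewrite -[walk_edges _ _]/(take 4 (walk_edges d (chain x))).
    by rewrite take_uniq // walk_edges_chain // chain_edges_uniq.
  rewrite /= !inE !negb_or (neqBA _ _ labB x1A) (neq2 _ _ _ d1 d2) (neqBA _ _ labB enA).
  rewrite no_clash // (neqAB _ _ x1A x2B) (neq2 _ _ _ d2 d3) (neqAB _ _ x1A tipB).
  by rewrite (neqBA _ _ x2B enA) (neq2 _ _ _ d3 d4) (neqAB _ _ enA tipB).
rewrite /canonical_walk trail /= path5 Mlab -surjective_pairing Fx -s1E // Fs1.
by rewrite Htip.
Qed.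

Lemma chains_decomposition : canonical_decomposition d M F H.
Proof.
exists [seq chain x | x <- enum D]; split.
- move=> s /mapP[x]; rewrite mem_enum => Dx ->.
  by rewrite /canonical_path /canonical_trail chain_canonical //; case: is_path.
- move=> e; split=> [/chain_edges_cover[x Dx ex]|[s /mapP[x]]].
    by exists (chain x); [apply: map_f; rewrite mem_enum | rewrite walk_edges_chain].
  by rewrite mem_enum => Dx -> ; rewrite walk_edges_chain //; apply: chain_edges_edges.
- move=> i j; rewrite size_map => lti ltj nij.
  have x0 : T * T by move: lti; case: (enum D) => // x0.
  rewrite !(nth_map x0) //; set x := nth x0 _ i; set y := nth x0 _ j.
  have Dx : x \in D by rewrite -mem_enum mem_nth.
  have Dy : y \in D by rewrite -mem_enum mem_nth.
  rewrite !walk_edges_chain // -setI_eq0; apply/eqP/setP => e.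
  rewrite in_set0 in_setI !in_set.
  apply/negbTE/andP => -[ex ey]; have : x == y by rewrite (chain_edges_inj Dx Dy ex ey).
  by rewrite nth_uniq ?enum_uniq // (negbTE nij).
Qed.

End Chains.

Lemma canonical_decomposition_of_factorization : canonical_decomposition d M F H.
Proof.
have [s1 [s1_onto s1_inj s1_head]] := pairing_at_B F_edge (fun v vB => (B_balanced vB).1).
have [s2 [s2_onto s2_inj s2_head]] := pairing_at_B H_edge (fun v vB => (B_balanced vB).2).
have [lab [tip [adm no_clash]]] := clash_free_labelling s1_onto s1_inj.
exact: (chains_decomposition s1_onto s1_inj s1_head s2_onto s2_inj s2_head adm no_clash).
Qed.

End Decomposition.

Lemma edge_connected_deg_ge (T : finType) (d : rel T) k v :
  simple_digraph d -> k_edge_connected d k -> k <= deg d v.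
Proof.
move=> [_ asym] [T2 conn]; rewrite leqNgt; apply/negP => lt_deg.
set S := [set dedge d v u | u in [set u | adj d v u]].
have [u nuv] : exists u, u != v.
  have [x [y [_ _ nxy]]] := card_gt1P T2.
  by case: (x =P v) => [exv|/eqP]; [exists y; rewrite -exv eq_sym | exists x].
have cutS : #|S :&: edges d| < k.
  apply: leq_ltn_trans (subset_leq_card (subsetIl _ _)) _.
  exact: leq_ltn_trans (leq_imset_card _ _) lt_deg.
case/connectP: (conn S cutS v u) => -[/= _ uv|y p /= /andP[vy _] _].
  by rewrite uv eqxx in nuv.
have Sy : dedge d v y \in S.
  by apply: imset_f; rewrite inE /adj; case/orP: vy => /andP[-> _]; rewrite ?orbT.
move: vy Sy; rewrite /dedge /adj; have := asym v y.
by case: (d v y); case: (d y v) => //= _; rewrite ?orbF => /negP.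
Qed.

Theorem mainTheorem4 (T : finType) (d : rel T) (A : {set T}) :
  simple_digraph d ->
  k_edge_connected d 6 ->
  bipartite_classes d A ->
  (forall v, v \in A -> 5 %| deg d v) ->
  forall M F H : {set T * T},
    fractional_factorization d A M F H ->
    canonical_decomposition d M F H.
Proof.
move=> d_simple d_conn d_bip deg5 M F H [[MFH_edges MF MH FH] [M_BA [A_reg B_bal]]].
apply: (canonical_decomposition_of_factorization d_simple d_bip MFH_edges MF MH FH
          M_BA A_reg B_bal) => v vA.
have := edge_connected_deg_ge v d_simple d_conn.
by have /dvdnP[q ->] := deg5 v vA; rewrite mulnK //; lia.
Qed.
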